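(* Let $n,k\geq1$. The dimension of the tropical RBM model $TM^k_n$ equals the maximum rank of a $2^n\times(nk+n+k)$ matrix of the form $\mathcal{A}=(A\mid A_{C_1}\mid A_{C_2}\mid\cdots\mid A_{C_k})$, where the maximum is taken over all choices of $k$ slicings $C_1,\dots,C_k$ of the $n$-cube.
   Context: Fix an ordering of $\{0,1\}^n$ indexing coordinates of $\mathbb{R}^{2^n}$ and matrix rows. The tropical morphism $\Phi:\mathbb{R}^{nk+n+k}\to\mathbb{TP}^{2^n-1}=\mathbb{R}^{2^n}/\mathbb{R}(1,\dots,1)$ sends $(W,b,c)\in\mathbb{R}^{k\times n}\times\mathbb{R}^n\times\mathbb{R}^k$ to the class of $(q(v))_{v\in\{0,1\}^n}$, $q(v)=\max_{h\in\{0,1\}^k}\{h^{\top}Wv+b^{\top}v+c^{\top}h\}$. The tropical RBM model $TM^k_n$ is the image of $\Phi$; it is a finite union of polyhedral cones and its dimension is the maximum dimension of a cone contained in it. A subset $C\subseteq\{0,1\}^n$ is a slicing of the $n$-cube if some affine hyperplane has all vertices of $C$ strictly on its positive side and all other vertices of $\{0,1\}^n$ strictly on its negative side. $A$ is the $2^n\times n$ matrix whose row indexed by $v$ is $v$; for a slicing $C$, $A_C$ is the $2^n\times(n+1)$ matrix whose row indexed by $v\in C$ is $(1,v)$ and whose other rows are zero.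
   Formalization: $TM^k_n$ is the set of vectors $(q(v))_{v\in\{0,1\}^n}$ in $\mathbb{R}^{2^n}$ rather than their classes in $\mathbb{TP}^{2^n-1}$, so its dimension is the largest dimension of a polyhedral cone in $\mathbb{R}^{2^n}$ contained in it. The statement above fails without it. *)

From HB Require Import structures.
From mathcomp Require Import all_boot all_order all_algebra.
From mathcomp Require Import reals.
Set Implicit Arguments. Unset Strict Implicit. Unset Printing Implicit Defensive.
Import Order.TTheory GRing.Theory Num.Theory.
Local Open Scope ring_scope.

Definition Cube (n : nat) := {ffun 'I_n -> bool}.

(* Number of coordinates of R^{2^n}; the fixed ordering of {0,1}^n is enum_val. *)
Definition N (n : nat) : nat := #|Cube n|.

Section RBM.
Variable R : realType.

Definition rbm_energy (n k : nat) (W : 'M[R]_(k, n)) (b : 'cV[R]_n) (c : 'cV[R]_k)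
  (v : Cube n) (h : Cube k) : R :=
  \sum_(i < k) \sum_(j < n) (h i)%:R * W i j * (v j)%:R
  + \sum_(j < n) b j 0 * (v j)%:R + \sum_(i < k) c i 0 * (h i)%:R.

(* q(v) = max over h in {0,1}^k of the energy (the max is over a nonempty
   finite set; the seed value is the term h = 0, which belongs to it). *)
Definition rbm_q (n k : nat) W b c (v : Cube n) : R :=
  \big[Num.max / rbm_energy W b c v [ffun => false]]_(h : Cube k)
     rbm_energy W b c v h.

Definition Phi (n k : nat) (W : 'M[R]_(k, n)) (b : 'cV[R]_n) (c : 'cV[R]_k)
  : 'rV[R]_(N n) :=
  \row_(r < N n) rbm_q W b c (enum_val r).

Definition inTM (n k : nat) (x : 'rV[R]_(N n)) : Prop :=
  exists (W : 'M[R]_(k, n)) (b : 'cV[R]_n) (c : 'cV[R]_k), x = Phi W b c.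

Definition cone_in_TM (n k m : nat) (G : 'M[R]_(m, N n)) : Prop :=
  forall lam : 'rV[R]_m, (forall i, 0 <= lam 0 i) -> inTM k (lam *m G).

(* Dimension of the cone generated by the rows of G = dim of its linear span. *)
Definition cone_dim (n m : nat) (G : 'M[R]_(m, N n)) : nat := \rank G.

Definition slicing (n : nat) (C : {set Cube n}) : Prop :=
  exists (a0 : R) (a : 'I_n -> R), forall v : Cube n,
    (v \in C -> 0 < a0 + \sum_(j < n) a j * (v j)%:R) /\
    (v \notin C -> a0 + \sum_(j < n) a j * (v j)%:R < 0).

Definition cubeA (n : nat) : 'M[R]_(N n, n) :=
  \matrix_(r < N n, j < n) ((enum_val r : Cube n) j)%:R.

(* A_C : row v is (1, v) if v in C, zero otherwise. *)
Definition cubeAC (n : nat) (C : {set Cube n}) : 'M[R]_(N n, n.+1) :=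
  \matrix_(r < N n, j < n.+1)
    (if enum_val r \in C then
       (if unlift ord0 j is Some j' then ((enum_val r : Cube n) j')%:R else 1)
     else 0).

Definition rbmA (n k : nat) (Cs : 'I_k -> {set Cube n}) :=
  row_mx (cubeA n) (\mxrow_(i < k) cubeAC (Cs i)).

End RBM.

From HB Require Import structures.
From mathcomp Require Import all_boot all_order all_algebra.
From mathcomp Require Import reals boolp lra.
Import Order.TTheory GRing.Theory Num.Theory.
Local Open Scope ring_scope.
Set Implicit Arguments. Unset Strict Implicit. Unset Printing Implicit Defensive.

(* Hidden unit i contributes max(0, c_i + W_i v) to q(v).  Hence on the cone of
   parameters for which unit i is active exactly on a slicing C_i, Phi is the linear
   map with matrix (A | A_{C_1} | ... | A_{C_k}); and every parameter lies in such a
   cone, since {v | c_i + W_i v > 0} is a slicing.  So TM^k_n is covered by finitely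
   many column spaces of these matrices, and a cone inside a finite union of subspaces
   lies in one of them: its dimension is at most the maximal rank.  Conversely, for
   given slicings, a parameter whose hidden inputs are far from 0 has a full-dimensional
   cone of parameters around it on which Phi stays linear, and its image has that rank. *)

Lemma ex_argmax (I : finType) (P : I -> Prop) (f : I -> nat) (i0 : I) :
  P i0 -> exists2 i, P i & forall j, P j -> (f j <= f i)%N.
Proof.
move=> /asboolP Pi0; case: (@arg_maxnP I i0 (fun i => `[< P i >]) f Pi0).
by move=> i /asboolP Pi fmax; exists i => // j /asboolP; apply: fmax.
Qed.

Section SubspaceUnion.
Variables (R : numFieldType) (I : finType) (p m : nat) (B : I -> 'M[R]_(p, m)).

(* Pigeonhole: two of the points [x0 + t y], [t <= #|I|], lie in a common [B i]. *)
Lemma ray_sub_union (Q : I -> Prop) (x0 y : 'rV[R]_m) :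
  (forall t : nat, exists2 i, Q i & ((x0 + t%:R *: y)%R <= B i)%MS) ->
  exists i, [/\ Q i, (x0 <= B i)%MS & (y <= B i)%MS].
Proof.
move=> onB.
have [f onBf] := @fin_all_exists 'I_#|I|.+1 (fun=> I)
    (fun t i => Q i /\ ((x0 + (t : nat)%:R *: y)%R <= B i)%MS)
    (fun t => let: ex_intro2 i Qi Bi := onB t in ex_intro _ i (conj Qi Bi)).
have /injectivePn[t1 [t2 t12 ft12]] : ~~ injectiveb f.
  by apply/injectiveP => /leq_card; rewrite card_ord ltnn.
have [[Qt1 Bt1] [_ Bt2]] := (onBf t1, onBf t2); rewrite -ft12 in Bt2.
have By : (y <= B (f t1))%MS.
  have t12R : (t1%:R - t2%:R : R) != 0 by rewrite subr_eq0 eqr_nat.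
  rewrite -[y](scale1r) -(mulVf t12R) -scalerA; apply: scalemx_sub.
  have -> : (t1%:R - t2%:R) *: y = (x0 + t1%:R *: y) - (x0 + t2%:R *: y).
    by rewrite scalerBl opprD addrACA subrr add0r.
  by apply: addmx_sub; rewrite ?eqmx_opp.
exists (f t1); split=> //.
rewrite -[x0](addrK (t1%:R *: y)); apply: addmx_sub => //.
by rewrite eqmx_opp scalemx_sub.
Qed.

(* Induct on the candidate subspaces: if some [x0] of [K] lies in none but the first,
   the ray [x0 + t y] pushes every [y] of [K] into the first. *)
Lemma submonoid_sub_union (P : I -> Prop) (K : 'rV[R]_m -> Prop) :
  K 0 -> (forall x y, K x -> K y -> K (x + y)) ->
  (forall y, K y -> exists2 i, P i & (y <= B i)%MS) ->
  exists2 i, P i & forall y, K y -> (y <= B i)%MS.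
Proof.
move=> K0 KD onB.
have Kray x0 y (t : nat) : K x0 -> K y -> K (x0 + t%:R *: y).
  move=> Kx0 Ky; elim: t => [|t IHt]; first by rewrite scale0r addr0.
  by rewrite -natr1 scalerDl scale1r addrA; apply: KD.
suff: forall s : seq I,
    (forall y, K y -> exists2 i, i \in s /\ P i & (y <= B i)%MS) ->
    exists2 i, P i & forall y, K y -> (y <= B i)%MS.
  by apply=> y /onB[i Pi yB]; exists i; rewrite ?mem_enum.
elim=> [|a s IHs] onBs; first by have [i []] := onBs 0 K0.
have [/IHs//|] := pselect (forall y, K y -> exists2 i, i \in s /\ P i & (y <= B i)%MS).
move=> /existsNP[x0 /not_implyP[Kx0 x0_out]].
have only_a i : i \in a :: s -> P i -> (x0 <= B i)%MS -> i = a.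
  rewrite inE => /orP[/eqP // | i_s] Pi x0B.
  by case: x0_out; exists i.
have [i [ias Pi] x0B] := onBs x0 Kx0.
exists a => [|y Ky]; first by rewrite -(only_a i ias Pi x0B).
have [j [[jas Pj] x0Bj yBj]] := @ray_sub_union (fun j => j \in a :: s /\ P j) x0 y
  (fun t => onBs _ (Kray x0 y t Kx0 Ky)).
by rewrite -(only_a j jas Pj x0Bj).
Qed.

End SubspaceUnion.

Lemma ex_pos_lower_bound (R : realDomainType) (T : finType) (f : T -> R) :
  exists2 e, 0 < e & forall t, 0 < f t -> e <= f t.
Proof.
exists (\big[Num.min/1]_(t | 0 < f t) f t); first exact: lt_bigmin.
by move=> t; apply: bigmin_le_cond.
Qed.

Section RBM.
Variables (R : realType) (n k : nat).

Definition preact (W : 'M[R]_(k, n)) (c : 'cV[R]_k) (v : Cube n) (i : 'I_k) : R :=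
  c i 0 + \sum_(j < n) W i j * (v j)%:R.

Lemma rbm_energyE W b c v h :
  rbm_energy W b c v h =
  \sum_(j < n) b j 0 * (v j)%:R + \sum_(i < k) (h i)%:R * preact W c v i.
Proof.
rewrite /rbm_energy addrAC addrC; congr (_ + _); rewrite -big_split /=.
apply: eq_bigr => i _; rewrite /preact mulrDr mulr_sumr addrC mulrC.
by congr (_ + _); apply: eq_bigr => j _; rewrite mulrA.
Qed.

(* The maximizing hidden state switches on exactly the units with positive input. *)
Lemma rbm_qE W b c v :
  rbm_q W b c v =
  \sum_(j < n) b j 0 * (v j)%:R + \sum_(i < k) Num.max 0 (preact W c v i).
Proof.
pose hmax : Cube k := [ffun i => 0 < preact W c v i].
have Ehmax : rbm_energy W b c v hmax =
    \sum_(j < n) b j 0 * (v j)%:R + \sum_(i < k) Num.max 0 (preact W c v i).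
  rewrite rbm_energyE; congr (_ + _); apply: eq_bigr => i _; rewrite ffunE.
  by case: ltP; rewrite ?mul1r ?mul0r.
have le_hmax h : rbm_energy W b c v h <= rbm_energy W b c v hmax.
  rewrite Ehmax rbm_energyE lerD2l; apply: ler_sum => i _.
  by case: (h i); rewrite ?mul1r ?mul0r ?le_max ?lexx ?orbT.
apply/le_anti; rewrite -Ehmax le_bigmax andbT.
by apply: bigmax_le => // h _; apply: le_hmax.
Qed.

(* A parameter vector lists b, then for each hidden unit i the block (c_i, W_i); this is
   the column layout of [rbmA]. *)
Definition nparams := (n + \sum_(i < k) n.+1)%N.

Definition hidden_block (x : 'rV[R]_nparams) (i : 'I_k) : 'rV[R]_n.+1 :=
  submxrow (rsubmx x : 'rV_(\sum_(i < k) n.+1)) i.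
Definition parW (x : 'rV[R]_nparams) : 'M[R]_(k, n) :=
  \matrix_(i, j) hidden_block x i 0 (lift ord0 j).
Definition parb (x : 'rV[R]_nparams) : 'cV[R]_n := (lsubmx x)^T.
Definition parc (x : 'rV[R]_nparams) : 'cV[R]_k := \col_i hidden_block x i 0 ord0.

Definition param (W : 'M[R]_(k, n)) (b : 'cV[R]_n) (c : 'cV[R]_k) : 'rV[R]_nparams :=
  row_mx b^T (\mxrow_(i < k)
    \row_(j < n.+1) if unlift ord0 j is Some j' then W i j' else c i 0).

Lemma paramK W b c :
  [/\ parW (param W b c) = W, parb (param W b c) = b & parc (param W b c) = c].
Proof.
split; apply/matrixP => i j.
- by rewrite mxE /hidden_block row_mxKr mxrowK !mxE liftK.
- by rewrite /parb row_mxKl trmxK.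
- by rewrite mxE /hidden_block row_mxKr mxrowK !mxE (ord1 j) unlift_none.
Qed.

Lemma rbmA_mulE (Cs : 'I_k -> {set Cube n}) (x : 'rV[R]_nparams) r :
  (x *m (rbmA R Cs)^T) 0 r =
  \sum_(j < n) parb x j 0 * ((enum_val r : Cube n) j)%:R +
  \sum_(i < k) if enum_val r \in Cs i then preact (parW x) (parc x) (enum_val r) i
               else 0.
Proof.
rewrite -[x in LHS]hsubmxK -[rsubmx x]submxrowK.
rewrite /rbmA tr_row_mx tr_mxrow mul_row_col mul_mxrow_mxcol mxE summxE.
congr (_ + _); first by rewrite mxE; apply: eq_bigr => j _; rewrite !mxE.
apply: eq_bigr => i _; rewrite mxE big_ord_recl !mxE unlift_none.
case: ifP => v_Cs; last first.
  by rewrite mulr0 add0r big1 // => j _; rewrite !mxE v_Cs mulr0.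
rewrite /preact !mxE mulr1; congr (_ + _); apply: eq_bigr => j _.
by rewrite !mxE v_Cs liftK.
Qed.

Definition linearity_region (Cs : 'I_k -> {set Cube n}) W c :=
  forall i v, (v \in Cs i -> 0 <= preact W c v i) /\ (v \notin Cs i -> preact W c v i <= 0).

Lemma Phi_rbmA Cs x : linearity_region Cs (parW x) (parc x) ->
  Phi (parW x) (parb x) (parc x) = x *m (rbmA R Cs)^T.
Proof.
move=> region; apply/matrixP => z r; rewrite (ord1 z) rbmA_mulE mxE rbm_qE.
congr (_ + _); apply: eq_bigr => i _; have [on off] := region i (enum_val r).
by case: (boolP (_ \in _)) => [/on /max_idPr | /off /max_idPl].
Qed.

Lemma slicing_gt0 (a0 : R) (a : 'I_n -> R) :
  slicing R [set v : Cube n | 0 < a0 + \sum_(j < n) a j * (v j)%:R].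
Proof.
have [e e_gt0 le_e] :=
  ex_pos_lower_bound (fun v : Cube n => a0 + \sum_(j < n) a j * (v j)%:R).
exists (a0 - e / 2), a => v; rewrite inE -addrAC subr_gt0 subr_lt0.
split=> [/le_e | ]; first by apply: lt_le_trans; rewrite ltr_pdivrMr ?ltr_pMr ?ltr1n.
by rewrite -leNgt => /le_lt_trans; apply; rewrite divr_gt0.
Qed.

Lemma slicing_margin (C : {set Cube n}) (m : R) : slicing R C ->
  exists (a0 : R) (a : 'I_n -> R), forall v : Cube n,
    (v \in C -> m <= a0 + \sum_(j < n) a j * (v j)%:R) /\
    (v \notin C -> a0 + \sum_(j < n) a j * (v j)%:R <= - m).
Proof.
move=> [a0 [a sides]].
pose l (v : Cube n) := a0 + \sum_(j < n) a j * (v j)%:R.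
have [e e_gt0 le_e] := ex_pos_lower_bound (fun v => `|l v|).
have l_norm_gt0 v : 0 < `|l v|.
  rewrite normr_gt0; have [] := sides v.
  by case: (v \in C) => [/(_ isT)/lt0r_neq0 | _ /(_ isT)/ltr0_neq0].
pose s := `|m| / e.
have sm v : `|m| <= s * `|l v|.
  by rewrite /s mulrAC ler_pdivlMr // ler_wpM2l // le_e.
exists (s * a0), (fun j => s * a j) => v.
have -> : s * a0 + \sum_(j < n) s * a j * (v j)%:R = s * l v.
  by rewrite /l mulrDr mulr_sumr; congr (_ + _); apply: eq_bigr => j _; rewrite mulrA.
have [pos neg] : (v \in C -> 0 < l v) /\ (v \notin C -> l v < 0) := sides v.
split=> [/pos l_gt0 | /neg l_lt0]; last rewrite lerNr -mulrN.
  by apply: le_trans (ler_norm m) _; rewrite -(gtr0_norm l_gt0) sm.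
by apply: le_trans (ler_norm m) _; rewrite -(ltr0_norm l_lt0) sm.
Qed.

Lemma Phi_sub_rbmA (W : 'M[R]_(k, n)) (b : 'cV[R]_n) (c : 'cV[R]_k) :
  exists2 Cs : {ffun 'I_k -> {set Cube n}},
    forall i, slicing R (Cs i) & (Phi W b c <= (rbmA R Cs)^T)%MS.
Proof.
pose Cs := [ffun i => [set v | 0 < preact W c v i]].
exists Cs => [i | ]; first by rewrite ffunE; apply: slicing_gt0.
have [EW Eb Ec] := paramK W b c.
have := @Phi_rbmA Cs (param W b c); rewrite EW Eb Ec => -> //; first exact: submxMl.
by move=> i v; rewrite ffunE inE -leNgt; split=> // /ltW.
Qed.

Lemma cone_in_TM_sub_rbmA m (G : 'M[R]_(m, N n)) : cone_in_TM k G ->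
  exists2 Cs : {ffun 'I_k -> {set Cube n}},
    forall i, slicing R (Cs i) & (G <= (rbmA R Cs)^T)%MS.
Proof.
move=> G_TM; pose K y := exists2 lam : 'rV[R]_m, forall i, 0 <= lam 0 i & y = lam *m G.
have [|x y [lx lx_ge0 ->] [ly ly_ge0 ->]|y [lam lam_ge0 ->]|Cs slicing_Cs K_Cs] :=
    @submonoid_sub_union R _ _ _ (fun Cs : {ffun 'I_k -> {set Cube n}} => (rbmA R Cs)^T)
      (fun Cs => forall i, slicing R (Cs i)) K.
- by exists 0 => [i|]; rewrite ?mxE ?mul0mx.
- by exists (lx + ly) => [i|]; rewrite ?mulmxDl // mxE addr_ge0.
- by have [W [b [c ->]]] := G_TM lam lam_ge0; apply: Phi_sub_rbmA.
exists Cs => //; apply/row_subP => i; rewrite rowE; apply: K_Cs.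
by exists (delta_mx 0 i) => // j; rewrite mxE ler0n.
Qed.

Definition margin_region (Cs : 'I_k -> {set Cube n}) (e : R) W c :=
  forall i v, (v \in Cs i -> e <= preact W c v i) /\ (v \notin Cs i -> preact W c v i <= - e).

Lemma ex_param_margin Cs (e : R) : (forall i, slicing R (Cs i)) ->
  exists x, margin_region Cs e (parW x) (parc x).
Proof.
move=> slicing_Cs; have [a] := fin_all_exists (fun i => slicing_margin e (slicing_Cs i)).
move=> /fin_all_exists[w sides].
pose W : 'M[R]_(k, n) := \matrix_(i, j) w i j; pose c : 'cV[R]_k := \col_i a i.
exists (param W 0 c); have [-> _ ->] := paramK W 0 c => i v.
by rewrite /preact !mxE; under eq_bigr do rewrite mxE; apply: sides.
Qed.

Lemma preact_paramD (a : R) x y v i :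
  preact (parW (a *: x + y)) (parc (a *: x + y)) v i =
  a * preact (parW x) (parc x) v i + preact (parW y) (parc y) v i.
Proof.
rewrite /preact !mxE mulrDr addrACA mulr_sumr -big_split /=; congr (_ + _).
by apply: eq_bigr => j _; rewrite !mxE mulrDl mulrA.
Qed.

Lemma preact_param_bound (y : 'rV[R]_nparams) (S : R) v i :
  (forall j, `|y 0 j| <= S) -> `|preact (parW y) (parc y) v i| <= n.+1%:R * S.
Proof.
move=> y_le; rewrite -natr1 mulrDl mul1r addrC; apply: le_trans (ler_normD _ _) _.
apply: lerD; first by rewrite !mxE.
have -> : n%:R * S = \sum_(j < n) S by rewrite sumr_const card_ord mulr_natl.
apply: le_trans (ler_norm_sum _ _ _) _; apply: ler_sum => j _.
rewrite normrM -[S]mulr1; apply: ler_pM => //; first by rewrite !mxE.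
by case: (v j); rewrite ?normr1 ?normr0.
Qed.

(* A perturbation by [y] moves each input by at most [(n + 1) S], which the margin absorbs. *)
Lemma margin_region_perturb Cs (xp y : 'rV[R]_nparams) (S : R) :
  margin_region Cs n.+1%:R (parW xp) (parc xp) -> 0 <= S -> (forall j, `|y 0 j| <= S) ->
  linearity_region Cs (parW (S *: xp + y)) (parc (S *: xp + y)).
Proof.
move=> margin S_ge0 y_le i v; rewrite preact_paramD.
have := preact_param_bound v i y_le; rewrite ler_norml => /andP[ge_y le_y].
have [on off] := margin i v.
split=> [/on | /off] bound; have := ler_wpM2l S_ge0 bound; nra.
Qed.

(* The cone is generated by the images of [xp + e_j] and [xp - e_j], where [xp] has
   margin [n + 1]; it lies in the linearity region, and its span contains every [e_j]. *)
Lemma rbmA_cone (Cs : 'I_k -> {set Cube n}) : (forall i, slicing R (Cs i)) ->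
  exists m (G : 'M[R]_(m, N n)), cone_in_TM k G /\ \rank G = \rank (rbmA R Cs).
Proof.
move=> slicing_Cs; have [xp margin] := ex_param_margin n.+1%:R slicing_Cs.
pose M := rbmA R Cs; pose Xp : 'M[R]_nparams := \matrix_(r, j) xp 0 j.
have XpE (l : 'rV[R]_nparams) : l *m Xp = (\sum_r l 0 r) *: xp.
  by apply/rowP => j; rewrite !mxE mulr_suml; apply: eq_bigr => r _; rewrite mxE.
pose G := col_mx (Xp + 1%:M) (Xp - 1%:M) *m M^T.
exists (nparams + nparams)%N, G; split.
  move=> lam lam_ge0; rewrite -[lam]hsubmxK.
  set l1 := lsubmx lam; set l2 := rsubmx lam.
  have l1_ge0 j : 0 <= l1 0 j by rewrite mxE.
  have l2_ge0 j : 0 <= l2 0 j by rewrite mxE.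
  pose S := \sum_r l1 0 r + \sum_r l2 0 r.
  have S_ge0 : 0 <= S by rewrite addr_ge0 ?sumr_ge0.
  have l12_le j : `|(l1 - l2) 0 j| <= S.
    have -> : (l1 - l2) 0 j = l1 0 j - l2 0 j by rewrite !mxE.
    apply: le_trans (ler_normB _ _) _; rewrite !ger0_norm //.
    by apply: lerD; rewrite (bigD1 j) //= lerDl sumr_ge0.
  pose x := S *: xp + (l1 - l2).
  exists (parW x), (parb x), (parc x).
  rewrite (Phi_rbmA (margin_region_perturb margin S_ge0 l12_le)) /G mulmxA.
  by rewrite mul_row_col mulmxDr mulmxBr !mulmx1 !XpE scalerDl addrACA.
apply/eqP; rewrite -(mxrank_tr M) eqn_leq mxrankS ?submxMl //=; apply: mxrankS.
have -> : M^T = (2^-1 *: row_mx 1%:M (- 1%:M)) *m G.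
  rewrite /G mulmxA -scalemxAl mul_row_col mulNmx !mul1mx opprB addrC addrA.
  by rewrite subrK -mulr2n -scaler_nat scalerA mulVf ?pnatr_eq0 // scale1r mul1mx.
exact: submxMl.
Qed.

End RBM.

Lemma slicing0 (R : realType) n : slicing R (set0 : {set Cube n}).
Proof.
exists (-1), (fun=> 0) => v; rewrite inE big1 ?addr0 ?ltrN10 // => j _.
by rewrite mul0r.
Qed.

Theorem theorem4p2 (R : realType) (n k : nat) (hn : (1 <= n)%N) (hk : (1 <= k)%N) :
  exists d : nat,
    ((exists Cs : 'I_k -> {set Cube n},
        (forall i, slicing R (Cs i)) /\ \rank (rbmA R Cs) = d) /\
     (forall Cs : 'I_k -> {set Cube n},
        (forall i, slicing R (Cs i)) -> (\rank (rbmA R Cs) <= d)%N)) /\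
    ((exists (m : nat) (G : 'M[R]_(m, N n)), cone_in_TM k G /\ cone_dim G = d) /\
     (forall (m : nat) (G : 'M[R]_(m, N n)), cone_in_TM k G -> (cone_dim G <= d)%N)).
Proof.
pose slicings (Cs : {ffun 'I_k -> {set Cube n}}) := forall i, slicing R (Cs i).
have slicings0 : slicings [ffun=> set0] by move=> i; rewrite ffunE; apply: slicing0.
have [Cm slicing_Cm Cm_max] := ex_argmax (fun Cs : {ffun _} => \rank (rbmA R Cs)) slicings0.
have rbmA_ffun (Cs : 'I_k -> {set Cube n}) : rbmA R (finfun Cs) = rbmA R Cs.
  by congr (rbmA R _); apply: funext => i; rewrite ffunE.
exists (\rank (rbmA R Cm)); split; split.
- by exists Cm.
- by move=> Cs slicing_Cs; rewrite -rbmA_ffun; apply: Cm_max => i; rewrite ffunE.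
- by have [m [G [G_TM rankG]]] := rbmA_cone slicing_Cm; exists m, G.
- move=> m G /cone_in_TM_sub_rbmA[Cs slicing_Cs G_sub].
  by rewrite /cone_dim (leq_trans (mxrankS G_sub)) // mxrank_tr Cm_max.
Qed.
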